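(* Let $A$ and $B$ be finite commutative groups and let $p_1,\dots,p_t$ be the distinct prime divisors of $|A|\,|B|$. For $i=1,\dots,t$ let $A_i$ and $B_i$ denote the (possibly trivial) $p_i$-primary components of $A$ and $B$, so that $A=A_1\times\cdots\times A_t$ and $B=B_1\times\cdots\times B_t$. Suppose $A_i=\mathbb{Z}_{q_{i,1}}\times\cdots\times\mathbb{Z}_{q_{i,n_i}}$ with each $q_{i,k}$ a power of $p_i$ ($n_i\ge 0$), and put $n=n_1+\cdots+n_t$, so that $A=(\mathbb{Z}_{q_{1,1}}\times\cdots\times\mathbb{Z}_{q_{1,n_1}})\times\cdots\times(\mathbb{Z}_{q_{t,1}}\times\cdots\times\mathbb{Z}_{q_{t,n_t}})$; attach one variable to each of these $n$ cyclic factors, the variables $X_{n_1+\cdots+n_{i-1}+1},\dots,X_{n_1+\cdots+n_i}$ belonging to $A_i$. Then $$B\binom{X_1,\dots,X_n}{A}=B_1\binom{X_1,\dots,X_{n_1}}{A_1}\times\cdots\times B_t\binom{X_{n-n_t+1},\dots,X_n}{A_t},$$ i.e. a $B$-polyfract $P=(P_1,\dots,P_t)$ (with $P_i$ a $B_i$-polyfract) has the periodicity given by $A$ if and only if each $P_i$ involves only the variables belonging to $A_i$ and is periodic with respect to $A_i$. Moreover, the set of maps $A\to B$ induced by these periodic polyfracts is exactly $$\{(a_1,\dots,a_t)\mapsto (f_1(a_1),\dots,f_t(a_t)) \;:\; f_1\in B_1^{A_1},\dots,f_t\in B_t^{A_t}\}.$$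
   Context: Notation: $\mathbb{Z}_r=\mathbb{Z}/r\mathbb{Z}$, with $\mathbb{Z}_0=\mathbb{Z}$ and $\mathbb{Z}_1=\{0\}$. For $\delta\in\mathbb{N}$, $\binom{X}{\delta}=X(X-1)\cdots(X-\delta+1)/\delta!$ and $\binom{X}{0}=1$; for $\delta\in\mathbb{N}^n$ the monofract is $\binom{X_1,\dots,X_n}{\delta_1,\dots,\delta_n}=\prod_{j}\binom{X_j}{\delta_j}$. For a finitely generated commutative group $B$, a $B$-polyfract in $X_1,\dots,X_n$ is a formal finite sum $P=\sum_{\delta\in\mathbb{N}^n}P_\delta\binom{X_1,\dots,X_n}{\delta_1,\dots,\delta_n}$ with coefficients $P_\delta\in B$; it is evaluated at $x\in\mathbb{Z}^n$ by $P(x)=\sum_\delta \big(\prod_j\binom{x_j}{\delta_j}\big)P_\delta\in B$ (integer multiples in $B$). The set of these is $B\binom{X_1,\dots,X_n}{\mathbb{Z}^n}$; if $B=B'\times B''$, a $B$-polyfract is identified with the pair of its coordinate polyfracts. For positive integers $q_1,\dots,q_n$, $B\binom{X_1,\dots,X_n}{\mathbb{Z}_{q_1}\times\cdots\times\mathbb{Z}_{q_n}}$ denotes the set of $B$-polyfracts $P$ whose evaluation map $\mathbb{Z}^n\to B$ is $q_j$-periodic in the $j$-th coordinate for every $j$; such a map is identified with the induced map $\mathbb{Z}_{q_1}\times\cdots\times\mathbb{Z}_{q_n}\to B$. When the domain is written as a product $A$ of cyclic groups, $B\binom{X_1,\dots,X_n}{A}$ means this set for the corresponding $q_j$. *)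

From HB Require Import structures.
From mathcomp Require Import all_boot all_order all_algebra.
Set Implicit Arguments. Unset Strict Implicit. Unset Printing Implicit Defensive.
Import Order.TTheory GRing.Theory Num.Theory.
Local Open Scope ring_scope.

(* Generalized binomial coefficient binom(x, k) = x(x-1)...(x-k+1)/k!  for x in Z,
   computed in Q; its value is an integer, and we return its numerator. *)
Definition binz (x : int) (k : nat) : int :=
  numq ((\prod_(j < k) (x - (j : nat)%:Z)%:~R) / (k`!)%:R : rat).

Definition expo (W : finType) := {ffun W -> nat}.

(* A B-polyfract: a formal finite sum  sum_t t.2 * binom(X, t.1). *)
Definition polyfract (W : finType) (B : zmodType) := seq (expo W * B).

Definition pf_coef (W : finType) (B : zmodType) (P : polyfract W B) (d : expo W) : B :=
  \sum_(t <- P | t.1 == d) t.2.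

Definition pf_eval (W : finType) (B : zmodType) (P : polyfract W B) (x : W -> int) : B :=
  \sum_(t <- P) (t.2 *~ (\prod_(w : W) binz (x w) (t.1 w))).

Definition shiftz (W : finType) (q : W -> nat) (x : W -> int) (w : W) : W -> int :=
  fun u => if u == w then x u + (q u)%:Z else x u.

Definition periodic (W : finType) (q : W -> nat) (T : Type) (f : (W -> int) -> T) : Prop :=
  forall (x : W -> int) (w : W), f (shiftz q x w) = f x.

(* The variable index type: variable (i,k) belongs to the k-th cyclic factor of A_i. *)
Definition vars (t : nat) (n : 'I_t -> nat) : finType := {i : 'I_t & 'I_(n i)}.

Definition restr_pt (t : nat) (n : 'I_t -> nat) (x : vars n -> int) (i : 'I_t)
  : 'I_(n i) -> int := fun k => x (Tagged (fun j => 'I_(n j)) k).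

Definition only_vars (t : nat) (n : 'I_t -> nat) (B : zmodType)
  (i : 'I_t) (P : polyfract (vars n) B) : Prop :=
  forall d : expo (vars n), pf_coef P d != 0 ->
    forall v : vars n, tag v != i -> d v = 0%N.

Definition restr_pf (t : nat) (n : 'I_t -> nat) (B : zmodType)
  (i : 'I_t) (P : polyfract (vars n) B) : polyfract 'I_(n i) B :=
  map (fun s : expo (vars n) * B =>
     ([ffun k : 'I_(n i) => s.1 (Tagged (fun j => 'I_(n j)) k)] : expo 'I_(n i), s.2)) P.

Arguments restr_pt {t n} x i.
Arguments restr_pf {t n B} i P.
Arguments only_vars {t n B} i P.

From HB Require Import structures.
From mathcomp Require Import all_boot all_order all_algebra fingroup cyclic ring.
From Stdlib Require Import FunctionalExtensionality IndefiniteDescription.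
Set Implicit Arguments. Unset Strict Implicit. Unset Printing Implicit Defensive.
Import Order.TTheory GRing.Theory Num.Theory.
Local Open Scope ring_scope.

(* "If" is immediate: a P_i involving only the variables of A_i only sees
   those coordinates.  "Only if": a variable X_v of A_j, j != i, has a period
   prime to #|B_i|; forward differences are nilpotent on polyfracts, and a
   function with nilpotent difference Delta_v and a period invertible on B_i
   is constant along e_v, so P_i has no monofract involving X_v (evaluate at
   natural points, by induction on the degree).  For the induced maps, a
   periodic f_i : Z^(n_i) -> B_i with p_i-power periods is a combination of
   products of indicators of residue classes mod a p_i-power L; each agrees,
   up to the exponent p^e of B_i, with its Newton series, which is finite
   because (X - 1)^L = X^L - 1 mod p gives Delta^(L e) = 0 on L-periodic maps. *)

Definition binq (x : int) (k : nat) : rat :=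
  (\prod_(j < k) (x - (j : nat)%:Z)%:~R) / (k`!)%:R.

Lemma binq0 (x : int) : binq x 0 = 1.
Proof. by rewrite /binq big_ord0 fact0 divr1. Qed.

Lemma binq0S (k : nat) : binq 0 k.+1 = 0.
Proof. by rewrite /binq big_ord_recl /= subr0 !mul0r. Qed.

Lemma binqS (x : int) (k : nat) : binq (x + 1) k.+1 = binq x k.+1 + binq x k.
Proof.
rewrite /binq big_ord_recl [in X in _ = X + _]big_ord_recr /=.
have -> : \prod_(i < k) ((x + 1 - (bump 0 i : nat)%:Z)%:~R : rat)
          = \prod_(i < k) ((x - (i : nat)%:Z)%:~R).
  apply: eq_bigr => i _; congr (_ %:~R).
  by rewrite /bump /= add1n -addn1 PoszD; ring.
move: (\prod_(i < k) _) => Pk.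
have hk : (k`!)%:R != 0 :> rat by rewrite pnatr_eq0 -lt0n fact_gt0.
have hk1 : (k.+1)%:R != 0 :> rat by rewrite pnatr_eq0.
rewrite factS natrM !rmorphB /= !rmorphD /= subr0 -[(k.+1)%:R]natr1.
by field; rewrite natr1 hk1 hk.
Qed.

Lemma binq_int (x : int) (k : nat) : binq x k \is a Num.int.
Proof.
elim: k x => [|k IH] x; first by rewrite binq0.
elim/int_rec: x => [|m hm|m hm]; first by rewrite binq0S.
  by rewrite -addn1 PoszD binqS rpredD.
have e := binqS (- (m.+1)%:Z) k.
rewrite (_ : - (m.+1)%:Z + 1 = - m%:Z) in e; last by rewrite -addn1 PoszD opprD addrNK.
by rewrite (_ : binq _ k.+1 = binq (- m%:Z) k.+1 - binq (- (m.+1)%:Z) k)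
  ?rpredB // e addrK.
Qed.

Lemma binzE (x : int) (k : nat) : (binz x k)%:~R = binq x k.
Proof. exact: numqK (binq_int x k). Qed.

Lemma binz0 (x : int) : binz x 0 = 1.
Proof. by apply: (@intr_inj rat); rewrite binzE binq0. Qed.

Lemma binz0S (k : nat) : binz 0 k.+1 = 0.
Proof. by apply: (@intr_inj rat); rewrite binzE binq0S. Qed.

Lemma binzS (x : int) (k : nat) : binz (x + 1) k.+1 = binz x k.+1 + binz x k.
Proof. by apply: (@intr_inj rat); rewrite rmorphD /= !binzE binqS. Qed.

Lemma binz_nat (n k : nat) : binz n%:Z k = ('C(n, k))%:R.
Proof.
elim: n k => [|n IH] [|k]; rewrite ?binz0 ?bin0 ?binz0S ?bin0n //.
by rewrite -addn1 PoszD binzS !IH addn1 binS natrD addrC.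
Qed.

Lemma coprime_torsionfree (U : finZmodType) (r : nat) (c : U) :
  coprime r #|U| -> c *+ r = 0 -> c = 0.
Proof.
move=> co hr; apply/eqP; rewrite -[c == 0]order_eq1 -dvdn1 -(eqP co).
rewrite dvdn_gcd order_dvdn FinRing.zmodXgE hr eqxx /=.
by rewrite -cardsT order_dvdG ?inE.
Qed.

Lemma mulrn_card (U : finZmodType) (c : U) : c *+ #|U| = 0.
Proof. by rewrite -FinRing.zmodXgE -cardsT expg_cardG ?inE. Qed.

Section Polyfract.
Variable W : finType.

Definition mono (d : expo W) (x : W -> int) : int := \prod_(u : W) binz (x u) (d u).

Definition pf_exps (B : zmodType) (P : polyfract W B) : seq (expo W) :=
  undup (map fst P).

Lemma sum_terms_coef (B G : zmodType) (P : polyfract W B) (F : expo W -> B -> G) :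
  (forall d, F d 0 = 0) -> (forall d a b, F d (a + b) = F d a + F d b) ->
  \sum_(s <- P) F s.1 s.2 = \sum_(d <- pf_exps P) F d (pf_coef P d).
Proof.
move=> F0 FD.
have F_sum d (r : seq (expo W * B)) (C : pred (expo W * B)) :
    F d (\sum_(s <- r | C s) s.2) = \sum_(s <- r | C s) F d s.2.
  elim: r => [|a r IH]; first by rewrite !big_nil F0.
  by rewrite !big_cons; case: (C a); rewrite ?FD IH.
rewrite /pf_coef; under [RHS]eq_bigr => d _ do rewrite F_sum big_mkcond.
rewrite exchange_big /= [LHS]big_seq [RHS]big_seq; apply: eq_bigr => s sP.
have s_exp : s.1 \in pf_exps P by rewrite mem_undup map_f.
rewrite (bigD1_seq s.1) ?undup_uniq //= eqxx big1 ?addr0 // => d hd.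
by case: eqP => // e; case/negP: hd; rewrite e.
Qed.

Lemma coef_exps (B : zmodType) (P : polyfract W B) (d : expo W) :
  pf_coef P d != 0 -> d \in pf_exps P.
Proof.
rewrite mem_undup; apply: contraR => dP.
rewrite /pf_coef big_seq_cond big1 // => s /andP[sP /eqP e].
by case/negP: dP; rewrite -e map_f.
Qed.

Lemma pf_evalE (B : zmodType) (P : polyfract W B) (x : W -> int) :
  pf_eval P x = \sum_(d <- pf_exps P) pf_coef P d *~ mono d x.
Proof.
rewrite /pf_eval (@sum_terms_coef _ _ P (fun d b => b *~ mono d x)) //.
  by move=> d; rewrite mul0rz.
by move=> d a b; rewrite mulrzDl.
Qed.

Lemma mono_self (d : expo W) : mono d (fun u => (d u)%:Z) = 1.
Proof. by rewrite /mono big1 // => u _; rewrite binz_nat binn. Qed.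

Lemma mono_small (d d' : expo W) (u : W) :
  (d u < d' u)%N -> mono d' (fun u => (d u)%:Z) = 0.
Proof. by move=> lt_u; rewrite /mono (bigD1 u) //= binz_nat bin_small ?mul0r. Qed.

Lemma mono_zero_coord (d : expo W) (y : W -> int) (w : W) :
  y w = 0 -> (0 < d w)%N -> mono d y = 0.
Proof.
move=> yw0; rewrite /mono (bigD1 w) //= yw0.
by case: (d w) => // k _; rewrite binz0S mul0r.
Qed.

Lemma mono_indep (d : expo W) (y y' : W -> int) (w : W) :
  d w = 0%N -> (forall u, u != w -> y u = y' u) -> mono d y = mono d y'.
Proof.
move=> dw0 eqy; apply: eq_bigr => u _.
by have [->|/eqy ->] := eqVneq u w; rewrite ?dw0 ?binz0.
Qed.

End Polyfract.

Section Differences.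
Variable W : finType.

Definition shift (x : W -> int) (w : W) (c : int) : W -> int :=
  fun u => if u == w then x u + c else x u.

Lemma shift0 (x : W -> int) (w : W) : shift x w 0 = x.
Proof. by apply: functional_extensionality => u; rewrite /shift addr0; case: eqP. Qed.

Lemma shiftD (x : W -> int) (w : W) (a b : int) :
  shift (shift x w a) w b = shift x w (a + b).
Proof.
by apply: functional_extensionality => u; rewrite /shift; case: eqP; rewrite ?addrA.
Qed.

Lemma shiftC (x : W -> int) (w : W) (a b : int) :
  shift (shift x w a) w b = shift (shift x w b) w a.
Proof. by rewrite !shiftD addrC. Qed.

Lemma shiftzE (q : W -> nat) (x : W -> int) (w : W) :
  shiftz q x w = shift x w (q w)%:Z.
Proof.
by apply: functional_extensionality => u; rewrite /shiftz /shift; case: eqP => // ->.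
Qed.

Variable G : zmodType.
Implicit Types (g : (W -> int) -> G) (x : W -> int) (w : W).

Definition periodic_in w (r : int) g := forall x, g (shift x w r) = g x.

Definition diff w g : (W -> int) -> G := fun x => g (shift x w 1) - g x.

Lemma periodic_in_iter_diff w r g m :
  periodic_in w r g -> periodic_in w r (iter m (diff w) g).
Proof.
move=> per; elim: m => //= m IH x.
by rewrite /diff shiftC !IH.
Qed.

Lemma periodic_in_mulz w r c g : periodic_in w r g -> periodic_in w (r * c) g.
Proof.
move=> per; have per_nat (m : nat) x : g (shift x w (r * m%:Z)) = g x.
  elim: m x => [|m IH] x; first by rewrite mulr0 shift0.
  by rewrite -addn1 PoszD mulrDr mulr1 -shiftD per IH.
case: c => m x; first exact: per_nat.
rewrite -(per_nat m.+1 (shift x w (r * Negz m))) shiftD NegzE.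
by rewrite mulrN addNr shift0.
Qed.

Lemma invariant_of_diff0 w g : (forall x, diff w g x = 0) ->
  forall x (s : nat), g (shift x w s%:Z) = g x.
Proof.
move=> Dg0 x; elim=> [|s IH]; first by rewrite shift0.
have /eqP := Dg0 (shift x w s%:Z).
by rewrite /diff shiftD -addn1 PoszD subr_eq0 => /eqP ->.
Qed.

Lemma affine_of_diff2 w g : (forall x, diff w (diff w g) x = 0) ->
  forall x (s : nat), g (shift x w s%:Z) = g x + diff w g x *+ s.
Proof.
move=> D2g0 x; elim=> [|s IH]; first by rewrite shift0 mulr0n addr0.
have e := invariant_of_diff0 D2g0 x s.
by rewrite -addn1 PoszD -shiftD mulrnDr mulr1n addrA -IH -e /diff addrC subrK.
Qed.

(* A function with nilpotent difference and a period r that is invertible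
   on G is constant along e_w: an affine periodic function is constant. *)
Lemma diff0_of_nilpotent w (r : nat) g (m : nat) :
  (forall c : G, c *+ r = 0 -> c = 0) -> periodic_in w r%:Z g ->
  (forall x, iter m (diff w) g x = 0) -> forall x, diff w g x = 0.
Proof.
move=> torsionfree per; elim: m => [|m IH] Dmg0.
  by move=> x; rewrite /diff /= in Dmg0 *; rewrite !Dmg0 subr0.
case: m IH Dmg0 => [|m] IH Dmg0; first exact: Dmg0.
apply: IH => x; apply: torsionfree.
have := affine_of_diff2 (g := iter m (diff w) g) Dmg0 x r.
by rewrite (periodic_in_iter_diff m per) => /eqP; rewrite addrC -subr_eq subrr eq_sym => /eqP.
Qed.

End Differences.

Section PolyfractDifferences.
Variables (W : finType) (G : zmodType).

Definition set_expo (d : expo W) (w : W) (k : nat) : expo W :=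
  [ffun u => if u == w then k else d u].

Lemma diff_mono (c : G) (d : expo W) (w : W) :
  diff w (fun x => c *~ mono d x) =
  fun x => if d w is k.+1 then c *~ mono (set_expo d w k) x else 0.
Proof.
apply: functional_extensionality => x; rewrite /diff /mono.
rewrite (bigD1 w) //= [X in _ - c *~ X](bigD1 w) //= {1}/shift eqxx.
have -> : \prod_(u | u != w) binz (shift x w 1 u) (d u)
          = \prod_(u | u != w) binz (x u) (d u).
  by apply: eq_bigr => u /negPf wu; rewrite /shift wu.
case: (d w) => [|k]; first by rewrite !binz0 subrr.
rewrite [in RHS](bigD1 w) //= /set_expo ffunE eqxx binzS.
have -> : \prod_(u | u != w) binz (x u) ([ffun u => if u == w then k else d u] u)
          = \prod_(u | u != w) binz (x u) (d u).
  by apply: eq_bigr => u /negPf wu; rewrite ffunE wu.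
by rewrite -mulrzBr mulrDl addrC addKr.
Qed.

Lemma iter_diff_mono (c : G) (d : expo W) (w : W) (m : nat) : (d w < m)%N ->
  iter m (diff w) (fun x => c *~ mono d x) = fun _ => 0.
Proof.
elim: m d => [|m IH] d //; rewrite ltnS => le_dw_m.
rewrite iterSr diff_mono; case dw: (d w) => [|k].
  by elim: m {IH le_dw_m} => //= m ->; apply: functional_extensionality => x; rewrite /diff subrr.
by apply: IH; rewrite ffunE eqxx -ltnS -dw.
Qed.

Lemma iter_diff_sum (I : Type) (r : seq I) (F : I -> (W -> int) -> G) (w : W) (m : nat) :
  iter m (diff w) (fun x => \sum_(i <- r) F i x) =
  fun x => \sum_(i <- r) iter m (diff w) (F i) x.
Proof.
by elim: m => //= m ->; apply: functional_extensionality => x; rewrite /diff -sumrB.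
Qed.

(* Differences are nilpotent on polyfracts: Delta_w lowers the degree in X_w. *)
Lemma pf_eval_nilpotent (P : polyfract W G) (w : W) :
  exists m, forall x, iter m (diff w) (pf_eval P) x = 0.
Proof.
exists (\max_(s <- P) s.1 w).+1 => x.
rewrite /pf_eval (iter_diff_sum P (fun s y => s.2 *~ mono s.1 y)).
rewrite big_seq big1 // => s sP.
by rewrite iter_diff_mono // ltnS (@leq_bigmax_seq _ _ _ (fun s : expo W * G => s.1 w)).
Qed.

Lemma sum_expo_lt (d d' : expo W) :
  (forall u, d' u <= d u)%N -> d' != d -> (\sum_u d' u < \sum_u d u)%N.
Proof.
move=> le_d'd ne.
have [u ne_u] : exists u, d' u != d u.
  apply/existsP; apply: contraR ne => /existsPn same.
  by apply/eqP/ffunP => u; apply/eqP; have := same u; rewrite negbK.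
rewrite (bigD1 u) // [X in (_ < X)%N](bigD1 u) //= -addSn leq_add //.
  by rewrite ltn_neqAle ne_u le_d'd.
by apply: leq_sum => v _; apply: le_d'd.
Qed.

(* If P(x) does not depend on x_w, no exponent with d_w > 0 occurs in P.
   Induction on |d|: compare P at the point d and at d with its w-th
   coordinate set to 0; only the monofract binom(X, d) separates them. *)
Lemma coef_vanish (P : polyfract W G) (w : W) :
  (forall x (s : nat), pf_eval P (shift x w s%:Z) = pf_eval P x) ->
  forall d, pf_coef P d != 0 -> d w = 0%N.
Proof.
move=> inv d; move: {2}(\sum_u d u)%N (erefl (\sum_u d u)%N) => N.
elim/ltn_ind: N d => N IH d sum_d cd_neq0; case dw: (d w) => [//|k].
pose y u := (d u)%:Z; pose y0 u := if u == w then 0 else y u.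
have y0w : y0 w = 0 by rewrite /y0 eqxx.
have y_shift : y = shift y0 w (d w)%:Z.
  by apply: functional_extensionality => u; rewrite /shift /y0; case: eqP => [->|]; rewrite ?add0r.
have others d' : d' != d -> pf_coef P d' *~ mono d' y - pf_coef P d' *~ mono d' y0 = 0.
  move=> ne; have [->|cd'] := eqVneq (pf_coef P d') 0; first by rewrite !mul0rz subrr.
  case d'w: (d' w) => [|k'].
    by rewrite (@mono_indep _ d' y y0 w) ?subrr // => u /negPf; rewrite /y0 => ->.
  rewrite (@mono_zero_coord _ d' y0 w) ?d'w // mulr0z subr0.
  have [/existsP [u lt_u]|/existsPn le_d'] := boolP [exists u, (d u < d' u)%N].
    by rewrite (mono_small lt_u) mulr0z.
  have lt_N : (\sum_u d' u < N)%N.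
    by rewrite -sum_d sum_expo_lt // => u; rewrite leqNgt le_d'.
  by have := IH _ lt_N d' erefl cd'; rewrite d'w.
have /eqP := inv y0 (d w); rewrite -y_shift -subr_eq0 !pf_evalE -sumrB.
rewrite (bigD1_seq d) ?undup_uniq ?coef_exps //= big1 => [|d' /others //].
by rewrite addr0 -mulrzBr mono_self (mono_zero_coord y0w) ?dw // subr0 mulr1z (negPf cd_neq0).
Qed.

End PolyfractDifferences.

Lemma periodic_coef_vanish (W : finType) (U : finZmodType) (P : polyfract W U)
    (w : W) (r : nat) :
  coprime r #|U| -> periodic_in w r%:Z (pf_eval P) ->
  forall d, pf_coef P d != 0 -> d w = 0%N.
Proof.
move=> co per; apply: coef_vanish; apply: invariant_of_diff0.
have [m Dm0] := pf_eval_nilpotent P w.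
apply: (diff0_of_nilpotent _ per Dm0) => c.
exact: coprime_torsionfree.
Qed.

Section Components.
Variables (t : nat) (n : 'I_t -> nat).
Local Notation var i k := (Tagged (fun j => 'I_(n j)) (k : 'I_(n i))).

Lemma untag_var (R : Type) (r0 : R) (i : 'I_t) (F : 'I_(n i) -> R) (k : 'I_(n i)) :
  untag r0 F (var i k) = F k.
Proof. by rewrite /untag /=; case: eqP => // e; rewrite (eq_axiomK e). Qed.

Definition extend_pt (i : 'I_t) (y : 'I_(n i) -> int) : vars n -> int :=
  fun v => untag 0 y v.

Lemma restr_extend_pt (i : 'I_t) (y : 'I_(n i) -> int) : restr_pt (extend_pt y) i = y.
Proof. by apply: functional_extensionality => k; rewrite /restr_pt /extend_pt untag_var. Qed.

Lemma prod_vars (F : vars n -> int) (i : 'I_t) :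
  (forall v, tag v != i -> F v = 1) -> \prod_v F v = \prod_(k : 'I_(n i)) F (var i k).
Proof.
move=> F1; rewrite (big_tag (fun i (k : 'I_(n i)) => F (var i k)) i) [RHS]big_mkcond.
apply: eq_bigr => v _; rewrite inE; case: eqP => e; first by rewrite (untagE _ _ e) etaggedK.
by rewrite F1 //; apply/eqP.
Qed.

Lemma eval_restr (B : zmodType) (i : 'I_t) (P : polyfract (vars n) B) (x : vars n -> int) :
  only_vars i P -> pf_eval P x = pf_eval (restr_pf i P) (restr_pt x i).
Proof.
move=> ov; rewrite /pf_eval /restr_pf big_map /=.
pose F_of (T : finType) (z : T -> int) (d : expo T) (b : B) := b *~ \prod_u binz (z u) (d u).
have F0 T z d : F_of T z d 0 = 0 by rewrite /F_of mul0rz.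
have FD T z d a b : F_of T z d (a + b) = F_of T z d a + F_of T z d b.
  by rewrite /F_of mulrzDl.
rewrite (@sum_terms_coef _ _ _ P (F_of _ x) (F0 _ x) (FD _ x)).
rewrite (@sum_terms_coef _ _ _ P (fun d => F_of _ (restr_pt x i) [ffun k => d (var i k)])) /F_of;
  last 2 first; [by move=> *; apply: F0 | by move=> *; apply: FD |].
apply: eq_bigr => d _; have [->|cd] := eqVneq (pf_coef P d) 0; first by rewrite !mul0rz.
congr (_ *~ _); rewrite (@prod_vars _ i) => [|v /(ov d cd v) ->]; last by rewrite binz0.
by apply: eq_bigr => k _; rewrite ffunE.
Qed.

Definition lift_pf (B : zmodType) (i : 'I_t) (Q : polyfract 'I_(n i) B) : polyfract (vars n) B :=
  map (fun s : expo 'I_(n i) * B => ([ffun v => untag 0%N s.1 v] : expo (vars n), s.2)) Q.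

Lemma restr_lift_pf (B : zmodType) (i : 'I_t) (Q : polyfract 'I_(n i) B) :
  restr_pf i (lift_pf Q) = Q.
Proof.
rewrite /restr_pf /lift_pf -map_comp -[RHS]map_id; apply: eq_map => -[d b] /=.
by congr (_, _); apply/ffunP => k; rewrite !ffunE untag_var.
Qed.

Lemma only_vars_lift_pf (B : zmodType) (i : 'I_t) (Q : polyfract 'I_(n i) B) :
  only_vars i (lift_pf Q).
Proof.
move=> d /coef_exps; rewrite mem_undup /lift_pf -map_comp => /mapP [[d' b] _ /= ->] v vi.
by rewrite ffunE untag_dflt.
Qed.

Variable q : forall i : 'I_t, 'I_(n i) -> nat.
Arguments q : clear implicits.
Let qA := fun v : vars n => q (tag v) (tagged v).

Lemma restr_shift_same (i : 'I_t) (x : vars n -> int) (k : 'I_(n i)) :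
  restr_pt (shiftz qA x (var i k)) i = shiftz (q i) (restr_pt x i) k.
Proof. by apply: functional_extensionality => k'; rewrite /restr_pt /shiftz eq_Tagged. Qed.

Lemma restr_shift_other (i j : 'I_t) (x : vars n -> int) (k : 'I_(n j)) :
  j != i -> restr_pt (shiftz qA x (var j k)) i = restr_pt x i.
Proof.
move=> ji; apply: functional_extensionality => k'; rewrite /restr_pt /shiftz.
by case: eqP => // /(congr1 tag) /= ij; rewrite ij eqxx in ji.
Qed.

Lemma extend_shift (i : 'I_t) (y : 'I_(n i) -> int) (k : 'I_(n i)) :
  extend_pt (shiftz (q i) y k) = shiftz qA (extend_pt y) (var i k).
Proof.
apply: functional_extensionality => -[j k']; rewrite /extend_pt /shiftz.
have [ji|ji] := eqVneq j i; first by subst j; rewrite !untag_var eq_Tagged /=; case: eqP.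
rewrite untag_dflt //; case: eqP => [/(congr1 tag) /= ij|_]; last by rewrite untag_dflt.
by rewrite ij eqxx in ji.
Qed.

Variable B : 'I_t -> finZmodType.

Lemma periodic_of_components (P : forall i, polyfract (vars n) (B i)) :
  (forall i, only_vars i (P i) /\ periodic (q i) (pf_eval (restr_pf i (P i)))) ->
  periodic qA (fun x i => pf_eval (P i) x).
Proof.
move=> comp x [j k]; apply: functional_extensionality_dep => i.
have [ov per] := comp i; rewrite !(eval_restr _ ov).
have [ji|ji] := eqVneq j i; first by subst j; rewrite restr_shift_same per.
by rewrite restr_shift_other.
Qed.

Lemma components_of_periodic (P : forall i, polyfract (vars n) (B i)) :
  (forall i v, tag v != i -> coprime (qA v) #|B i|) ->
  periodic qA (fun x i => pf_eval (P i) x) ->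
  forall i, only_vars i (P i) /\ periodic (q i) (pf_eval (restr_pf i (P i))).
Proof.
move=> co per i.
have per_i x v : pf_eval (P i) (shiftz qA x v) = pf_eval (P i) x.
  by have := per x v => /(congr1 (fun F => F i)).
have ov : only_vars i (P i).
  move=> d cd v vi; apply: (periodic_coef_vanish (co i v vi) _ cd) => x.
  by rewrite -shiftzE per_i.
split=> // y k.
by rewrite -[y]restr_extend_pt -restr_shift_same -!eval_restr // -extend_shift per_i.
Qed.

End Components.

Section Congruences.
Variable R : comPzRingType.

Lemma exprD_mul (a b c : R) (m : nat) : exists S, (a + c * b) ^+ m = a ^+ m + c * S.
Proof.
elim: m => [|m [S IH]]; first by exists 0; rewrite !expr0 mulr0 addr0.
by exists (b * a ^+ m + a * S + c * b * S); rewrite exprS IH exprS; ring.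
Qed.

Lemma exprD_prime (a b : R) (p : nat) : prime p ->
  exists T, (a + b) ^+ p = a ^+ p + b ^+ p + p%:R * T.
Proof.
case: p => [//|p] pp.
exists (\sum_(i < p) a ^+ (p.+1 - i.+1) * b ^+ i.+1 *+ ('C(p.+1, i.+1) %/ p.+1)).
rewrite exprDn big_ord_recr big_ord_recl /= subnn subn0 binn bin0 !expr0 mulr1 mul1r !mulr1n.
rewrite [RHS]addrAC; congr (_ + _ + _); rewrite mulr_sumr; apply: eq_bigr => i _.
by rewrite mulr_natl -mulrnA divnK ?prime_dvd_bin //= ltnS ltn_ord.
Qed.

Lemma sub1_expr_ppow (z : R) (p k : nat) : prime p ->
  exists H, (z - 1) ^+ (p ^ k) = z ^+ (p ^ k) - 1 + p%:R * H.
Proof.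
move=> pp; elim: k => [|k [H IH]]; first by exists 0; rewrite expn0 !expr1 mulr0 addr0.
have [T fresh] := exprD_prime (z ^+ (p ^ k) - 1) 1 pp.
have [S hS] := exprD_mul (z ^+ (p ^ k) - 1) H p%:R p.
exists (S - T); rewrite expnSr !exprM IH hS.
by rewrite subrK expr1n in fresh; rewrite fresh; ring.
Qed.

End Congruences.

Section ShiftOperators.
Variable G : zmodType.
Implicit Types (Q S : {poly int}) (h : int -> G) (y : int) (c : int).

Definition delta h : int -> G := fun y => h (y + 1) - h y.

(* The integer polynomial Q acts on functions Z -> G as Q(T), where T is the
   shift h |-> h(. + 1); Delta is then the action of X - 1. *)
Definition poly_act Q h : int -> G := fun y => \sum_(i < size Q) h (y + i%:Z) *~ Q`_i.

Lemma poly_act_widen (m : nat) Q h y : (size Q <= m)%N ->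
  poly_act Q h y = \sum_(i < m) h (y + i%:Z) *~ Q`_i.
Proof.
move=> le_Qm; rewrite /poly_act (big_ord_widen m (fun i => h (y + i%:Z) *~ Q`_i) le_Qm).
rewrite big_mkcond; apply: eq_bigr => i _.
by case: ifP => // /negbT; rewrite -leqNgt => le_Qi; rewrite nth_default // mulr0z.
Qed.

Lemma poly_act_ext Q h h' : (forall y, h y = h' y) -> forall y, poly_act Q h y = poly_act Q h' y.
Proof. by move=> e y; apply: eq_bigr => i _; rewrite e. Qed.

Lemma poly_act0 Q y : poly_act Q (fun _ => 0) y = 0.
Proof. by rewrite /poly_act big1 // => i _; rewrite mul0rz. Qed.

Lemma poly_actD Q S h y : poly_act (Q + S) h y = poly_act Q h y + poly_act S h y.
Proof.
pose m := maxn (size Q) (size S).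
rewrite !(@poly_act_widen m) ?leq_maxl ?leq_maxr ?(leq_trans (size_polyD _ _)) //.
by rewrite -big_split; apply: eq_bigr => i _; rewrite coefD mulrzDr.
Qed.

Lemma poly_actN Q h y : poly_act (- Q) h y = - poly_act Q h y.
Proof.
by rewrite /poly_act size_polyN -sumrN; apply: eq_bigr => i _; rewrite coefN mulrNz.
Qed.

Lemma poly_actCM c Q h y : poly_act (c%:P * Q) h y = poly_act Q h y *~ c.
Proof.
rewrite (@poly_act_widen (size Q)); last by rewrite mul_polyC size_scale_leq.
rewrite /poly_act mulrz_suml; apply: eq_bigr => i _.
by rewrite coefCM mulrzA_C mulrC.
Qed.

Lemma poly_actC c h y : poly_act c%:P h y = h y *~ c.
Proof.
rewrite (@poly_act_widen 1) ?size_polyC ?leq_b1 //.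
by rewrite big_ord1 coefC /= addr0.
Qed.

Lemma poly_actX Q h y : poly_act ('X * Q) h y = poly_act Q h (y + 1).
Proof.
rewrite (@poly_act_widen (size Q).+1); last first.
  by rewrite (leq_trans (size_polyMleq _ _)) // size_polyX.
rewrite big_ord_recl coefXM /= mulr0z add0r; apply: eq_bigr => i _.
by rewrite coefXM /= /bump /= add1n -addn1 PoszD addrA [y + _ + 1]addrAC.
Qed.

Lemma poly_actM Q S h y : poly_act (Q * S) h y = poly_act Q (poly_act S h) y.
Proof.
elim/poly_ind: Q S h y => [|Q c IH] S h y; first by rewrite mul0r /poly_act size_poly0 !big_ord0.
rewrite mulrDl !poly_actD poly_actCM poly_actC -mulrA IH [Q * _]mulrC poly_actX.
congr (_ + _); rewrite (@poly_act_ext Q _ (fun z => poly_act S h (z + 1))) => [|z];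
  last by rewrite poly_actX.
by apply: eq_bigr => i _; rewrite addrAC.
Qed.

Lemma poly_act1 h y : poly_act 1 h y = h y.
Proof. by rewrite -polyC1 poly_actC mulr1z. Qed.

Lemma poly_actXn (m : nat) h y : poly_act ('X ^+ m) h y = h (y + m%:Z).
Proof.
elim: m y => [|m IH] y; first by rewrite expr0 poly_act1 addr0.
by rewrite exprS poly_actX IH -addn1 PoszD addrAC addrA.
Qed.

Lemma poly_act_delta (m : nat) h y : poly_act (('X - 1) ^+ m) h y = iter m delta h y.
Proof.
elim: m h y => [|m IH] h y; first by rewrite expr0 poly_act1.
have act_Xsub1 h' y' : poly_act ('X - 1) h' y' = delta h' y'.
  by rewrite poly_actD poly_actN -['X]mulr1 poly_actX !poly_act1.
by rewrite exprS poly_actM act_Xsub1 /delta !IH.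
Qed.

End ShiftOperators.
Arguments delta {G}.
Arguments poly_act {G}.

(* If h : Z -> G is p^k-periodic and p^e kills G, then Delta^(p^k e) h = 0:
   modulo p, (X - 1)^(p^k) is X^(p^k) - 1, which kills h. *)
Lemma delta_nilpotent (G : zmodType) (p k e : nat) (h : int -> G) : prime p ->
  (forall y, h (y + (p ^ k)%:Z) = h y) -> (forall g : G, g *+ (p ^ e) = 0) ->
  forall y, iter (p ^ k * e) delta h y = 0.
Proof.
move=> pp per kill y.
have [H eH] := sub1_expr_ppow ('X : {poly int}) k pp.
have [S eS] := exprD_mul (p%:R * H) 1 ('X ^+ (p ^ k) - 1) e.
have kills_h z : poly_act ('X ^+ (p ^ k) - 1) h z = 0.
  by rewrite poly_actD poly_actN poly_actXn poly_act1 per subrr.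
rewrite -poly_act_delta exprM eH addrC -[_ - 1]mulr1 eS poly_actD [_ * S]mulrC poly_actM.
rewrite (poly_act_ext _ kills_h) poly_act0 addr0.
by rewrite exprMn -natrX -polyC_natr poly_actCM mulrz_nat kill.
Qed.

Lemma eq0_of_delta0 (G : zmodType) (h : int -> G) :
  (forall y, h (y + 1) = h y) -> h 0 = 0 -> forall y, h y = 0.
Proof.
move=> inv h0; elim/int_rec => [//|m hm|m hm]; first by rewrite -addn1 PoszD inv.
by rewrite -inv -addn1 PoszD opprD addrNK.
Qed.

Lemma newton (G : zmodType) (N : nat) (h : int -> G) : (forall y, iter N delta h y = 0) ->
  forall y, h y = \sum_(j < N) (iter j delta h 0) *~ binz y j.
Proof.
elim: N h => [|N IH] h DNh y; first by rewrite big_ord0; apply: DNh.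
have Dh_eq : forall z, delta h z = \sum_(j < N) (iter j delta (delta h) 0) *~ binz z j.
  by apply: IH => z; rewrite -iterSr.
pose S z := \sum_(j < N.+1) (iter j delta h 0) *~ binz z j.
have delta_S z : S (z + 1) - S z = delta h z.
  rewrite /S -sumrB big_ord_recl /= !binz0 subrr add0r Dh_eq.
  apply: eq_bigr => j _; rewrite -mulrzBr /bump /= add1n binzS addrAC subrr add0r.
  by rewrite add0n -iterSr.
have S0 : S 0 = h 0.
  by rewrite /S big_ord_recl binz0 mulr1z big1 ?addr0 // => j _; rewrite binz0S mulr0z.
apply/eqP; rewrite -subr_eq0; apply/eqP; rewrite -/(S y); move: y.
apply: eq0_of_delta0; last by rewrite S0 subrr.
move=> z; have -> : S (z + 1) = delta h z + S z by rewrite -delta_S subrK.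
by rewrite opprD addrA /delta opprB [h (z + 1) + _]addrC subrK.
Qed.

Lemma iter_delta_mulz (G : zmodType) (b : G) (u : int -> int) (j : nat) (z : int) :
  iter j delta (fun y => b *~ u y) z = b *~ iter j delta u z.
Proof. by elim: j z => [|j IH] z //=; rewrite /delta !IH mulrzBr. Qed.

Lemma mulrz_prod_congr (W : finType) (G : zmodType) (F H : W -> int) :
  (forall w (b : G), b *~ F w = b *~ H w) ->
  forall b : G, b *~ \prod_w F w = b *~ \prod_w H w.
Proof.
move=> FH; elim/big_rec2: _ => [b //|w y1 y2 _ IH b].
by rewrite mulrzA FH -mulrzA [H w * y2]mulrC [LHS]mulrzA IH -mulrzA [y1 * _]mulrC.
Qed.

Lemma pnat_expn_logn (p m : nat) : prime p -> p.-nat m -> m = (p ^ logn p m)%N.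
Proof. by move=> pp pm; rewrite -p_part part_pnat_id. Qed.

(* With L the product of the periods, f is a
   combination of products of the L-periodic indicators [y = a mod L], and
   each indicator is, up to the exponent p^e of U, an integer combination of
   binomial coefficients by Newton interpolation. *)
Section Existence.
Variables (W : finType) (U : finZmodType) (p : nat) (q : W -> nat) (f : (W -> int) -> U).
Hypotheses (pp : prime p) (pq : forall w, p.-nat (q w)) (pU : p.-nat #|U|)
  (per : periodic q f).

Let L := (\prod_w q w)%N.

Lemma common_period_pnat : p.-nat L.
Proof. by rewrite /L; elim/big_rec: _ => // w m _ pm; rewrite pnatM pq pm. Qed.

Lemma common_period_gt0 : (0 < L)%N.
Proof. by have /andP[] := common_period_pnat. Qed.

Lemma common_period (w : W) (c : int) : periodic_in w (L%:Z * c) f.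
Proof.
rewrite /L (bigD1 w) //= PoszM -mulrA; apply: periodic_in_mulz => x.
by rewrite -shiftzE per.
Qed.

Lemma eq_mod_common_period (z z' : W -> int) :
  (forall w, exists c : int, z w = z' w + L%:Z * c) -> f z = f z'.
Proof.
have ind (s : seq W) z1 : (forall w, w \notin s -> z1 w = z' w) ->
    (forall w, exists c : int, z1 w = z' w + L%:Z * c) -> f z1 = f z'.
  elim: s z1 => [|w s IH] z1 out_s congr_z1.
    by congr f; apply: functional_extensionality => u; apply: out_s.
  have [c zc] := congr_z1 w; rewrite -(common_period w (- c) z1); apply: IH => u.
    move=> us; rewrite /shift; case: eqP => [->|/eqP uw]; first by rewrite zc mulrN addrK.
    by apply: out_s; rewrite inE negb_or uw.
  rewrite /shift; case: eqP => [->|_]; last exact: congr_z1.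
  by exists 0; rewrite zc mulrN addrK mulr0 addr0.
by apply: (ind (enum W)) => w; rewrite mem_enum.
Qed.

Definition ind_mod (a y : int) : int := if (y %% L%:Z)%Z == a then 1 else 0.

Let e := logn p #|U|.
Let N := (p ^ logn p L * e)%N.

Definition ind_coef (a : int) (j : nat) : int := iter j delta (ind_mod a) 0.

Lemma ind_mod_newton (a : int) (b : U) (y : int) :
  b *~ ind_mod a y = b *~ (\sum_(j < N) ind_coef a j * binz y j).
Proof.
have DN_ind z : iter N delta (fun y => b *~ ind_mod a y) z = 0.
  apply: delta_nilpotent => // [y'|g]; last by rewrite /e -(pnat_expn_logn pp pU) mulrn_card.
  by rewrite -(pnat_expn_logn pp common_period_pnat) /ind_mod modzDr.
rewrite (newton DN_ind y) mulrz_sumr; apply: eq_bigr => j _.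
by rewrite iter_delta_mulz mulrzA.
Qed.

Lemma ind_mod_decomp (x : W -> int) :
  f x = \sum_(a : {ffun W -> 'I_L})
          f (fun w => (a w : nat)%:Z) *~ \prod_w ind_mod (a w : nat)%:Z (x w).
Proof.
have L_neq0 : L%:Z != 0 by rewrite eqz_nat -lt0n common_period_gt0.
have res_lt w : (`|(x w %% L%:Z)%Z| < L)%N.
  by rewrite -ltz_nat gez0_abs ?modz_ge0 ?ltz_pmod ?ltz_nat ?common_period_gt0.
pose a0 : {ffun W -> 'I_L} := [ffun w => Ordinal (res_lt w)].
have a0E w : (a0 w : nat)%:Z = (x w %% L%:Z)%Z by rewrite ffunE /= gez0_abs ?modz_ge0.
rewrite (bigD1 a0) //= [X in _ *~ X]big1 => [|w _]; last by rewrite /ind_mod a0E eqxx.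
rewrite big1 ?mulr1z ?addr0 => [|a aa0].
  apply: eq_mod_common_period => w; exists (x w %/ L%:Z)%Z.
  by rewrite a0E addrC mulrC -divz_eq.
have [w aw] : exists w, a w != a0 w.
  apply/existsP; apply: contraR aa0 => /existsPn same.
  by apply/eqP/ffunP => v; apply/eqP; have := same v; rewrite negbK.
by rewrite (bigD1 w) //= {1}/ind_mod -a0E eqz_nat ifN ?mul0r ?mulr0z // eq_sym.
Qed.

Lemma exists_pf : exists Q : polyfract W U, forall y, pf_eval Q y = f y.
Proof.
exists [seq ([ffun w => (d w : nat)] : expo W,
             f (fun w => (a w : nat)%:Z) *~ \prod_w ind_coef (a w : nat)%:Z (d w))
       | a : {ffun W -> 'I_L} <- enum {ffun W -> 'I_L},
         d : {ffun W -> 'I_N} <- enum {ffun W -> 'I_N}] => y.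
rewrite ind_mod_decomp /pf_eval big_allpairs_dep /= big_enum /=; apply: eq_bigr => a _.
rewrite big_enum /=.
rewrite (mulrz_prod_congr (H := fun w => \sum_(j < N) ind_coef (a w : nat)%:Z j * binz (y w) j));
  last by move=> w b; apply: ind_mod_newton.
rewrite bigA_distr_bigA /= mulrz_sumr; apply: eq_bigr => d _.
by rewrite big_split /= mulrzA; congr (_ *~ _); apply: eq_bigr => w _; rewrite ffunE.
Qed.

End Existence.

Unset Implicit Arguments.
Theorem theorem3p15
  (t : nat) (p : 'I_t -> nat) (n : 'I_t -> nat)
  (q : forall i : 'I_t, 'I_(n i) -> nat)
  (B : 'I_t -> finZmodType)
  (hp_prime : forall i, prime (p i))
  (hp_inj : injective p)
  (hp_div : forall i, (p i %| (\prod_(v : vars n) q (tag v) (tagged v))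
                              * (\prod_(j < t) #|{: B j}|))%N)
  (hq : forall i k, (p i).-nat (q i k))
  (hB : forall i, (p i).-nat #|{: B i}|) :
  let qA := fun v : vars n => q (tag v) (tagged v) in
  (forall P : forall i, polyfract (vars n) (B i),
     periodic qA (fun x => fun i => pf_eval (P i) x)
     <-> (forall i, only_vars i (P i) /\ periodic (q i) (pf_eval (restr_pf i (P i)))))
  /\
  (forall F : (vars n -> int) -> forall i, B i,
     (exists P : forall i, polyfract (vars n) (B i),
        periodic qA (fun x => fun i => pf_eval (P i) x)
        /\ forall x, (fun i => pf_eval (P i) x) = F x)
     <->
     (exists f : forall i, ('I_(n i) -> int) -> B i,
        (forall i, periodic (q i) (f i))
        /\ forall x, F x = (fun i => f i (restr_pt x i)))).
Proof.
move=> qA.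
have coprime_periods i (v : vars n) : tag v != i -> coprime (qA v) #|B i|.
  move=> vi; apply: (pnat_coprime (hq _ _)); apply: sub_in_pnat (hB i) => r _.
  by rewrite !inE => /eqP ->; apply: contra_neq vi => /hp_inj ->.
have structure := components_of_periodic coprime_periods.
split=> [P|F]; first by split; [exact: structure | exact: periodic_of_components].
split=> [[P [per PF]]|[f [per_f Ff]]].
  exists (fun i => pf_eval (restr_pf i (P i))); split=> [i|x]; first by case: (structure P per i).
  rewrite -PF; apply: functional_extensionality_dep => i.
  by apply: eval_restr; case: (structure P per i).
have /(_ _)/constructive_indefinite_description Q i :=
  exists_pf (hp_prime i) (hq i) (hB i) (per_f i).
exists (fun i => lift_pf (sval (Q i))); split.
  apply: periodic_of_components => i; split; first exact: only_vars_lift_pf.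
  by rewrite restr_lift_pf => y k; rewrite !(svalP (Q i)) per_f.
move=> x; rewrite Ff; apply: functional_extensionality_dep => i.
by rewrite (eval_restr x (@only_vars_lift_pf _ _ _ i (sval (Q i)))) restr_lift_pf (svalP (Q i)).
Qed.
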